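(* Let $\mathbf{x}:[-1,1]^2\to\mathbb{R}^2$, $\mathbf{x}(\xi,\eta)=(x(\xi,\eta),y(\xi,\eta))$, be a $C^1$ map whose Jacobian $\mathbf{J}=\begin{bmatrix} x_\xi & x_\eta\\ y_\xi & y_\eta\end{bmatrix}$ is nonsingular on the edge $\{\xi=1\}$ (including the corners $(1,\pm1)$). Let $F(-1,\cdot)$, $F(\cdot,-1)$, $F(\cdot,1)$ be given differentiable functions on $[-1,1]$ (transformed Dirichlet data on the edges $\xi=-1$, $\eta=-1$, $\eta=1$), agreeing at the corners $(-1,\pm1)$; let $\alpha_{BC}$ be a constant and $u_{rBC}$ a given function on the image of the edge $\xi=1$ (Robin data). Define $S_{BC},W_{BC},T_{rBC},\lambda_B,\lambda_C,F^a_\eta(1,\pm1)$, the polynomials $\varphi_0,\varphi_1,\psi_0,\psi_1$ and the operators $Pg$, $F^g_\xi(1,\eta)$, $PF^g$ as in the context. Assume: if $\lambda_B=0$ then $F_\xi(1,-1)+\alpha_{BC}W_{BC}(-1)F(1,-1)-T_{rBC}(-1)=0$, and if $\lambda_C=0$ then $F_\xi(1,1)+\alpha_{BC}W_{BC}(1)F(1,1)-T_{rBC}(1)=0$. Then for every sufficiently differentiable $g:[-1,1]^2\to\mathbb{R}$, the function $V=g-Pg+PF^g$ satisfies, for all $\xi,\eta\in[-1,1]$, $V(\xi,-1)=F(\xi,-1)$, $V(\xi,1)=F(\xi,1)$, $V(-1,\eta)=F(-1,\eta)$, and $$V_\xi(1,\eta)+S_{BC}(\eta)V_\eta(1,\e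ta)+\alpha_{BC}W_{BC}(\eta)V(1,\eta)=T_{rBC}(\eta).$$
   Context: Setting: a curved quadrilateral $ABCD$ is the image of $[-1,1]^2$ under $\mathbf{x}$, with $A=\mathbf{x}(-1,-1)$, $B=\mathbf{x}(1,-1)$, $C=\mathbf{x}(1,1)$, $D=\mathbf{x}(-1,1)$; edges $AB:\eta=-1$, $BC:\xi=1$, $CD:\eta=1$, $AD:\xi=-1$. A field $u$ is represented as $V(\xi,\eta)=u(\mathbf{x}(\xi,\eta))$; the Robin condition $\mathbf n\cdot\nabla u+\alpha_{BC}u=u_{rBC}$ on $BC$ becomes the displayed condition on $V$. Notation: $F(1,-1):=F(\xi,-1)|_{\xi=1}$, $F(1,1):=F(\xi,1)|_{\xi=1}$, $F_\xi(1,\pm1):=\frac{d}{d\xi}F(\xi,\pm1)|_{\xi=1}$. Definitions: $K_{xBC}(\eta)=\frac{\|\mathbf{x}_\eta(1,\eta)\|}{\det\mathbf{J}(1,\eta)}$, $K_{yBC}(\eta)=-\frac{\mathbf{x}_\xi(1,\eta)\cdot\mathbf{x}_\eta(1,\eta)}{\|\mathbf{x}_\eta(1,\eta)\|\det\mathbf{J}(1,\eta)}$, $S_{BC}=K_{yBC}/K_{xBC}$, $W_{BC}=1/K_{xBC}$, $T_{rBC}(\eta)=u_{rBC}(\mathbf{x}(1,\eta))W_{BC}(\eta)$. Flags: $\lambda_B=0$ if $\mathbf{x}_\xi(1,-1)\cdot\mathbf{x}_\eta(1,-1)=0$, else $1$; $\lambda_C=0$ if $\mathbf{x}_\xi(1,1)\cdot\mathbf{x}_\eta(1,1)=0$,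 else $1$. When $\lambda_B=1$: $F^a_\eta(1,-1)=\frac{T_{rBC}(-1)-F_\xi(1,-1)-\alpha_{BC}W_{BC}(-1)F(1,-1)}{S_{BC}(-1)}$; when $\lambda_C=1$: $F^a_\eta(1,1)=\frac{T_{rBC}(1)-F_\xi(1,1)-\alpha_{BC}W_{BC}(1)F(1,1)}{S_{BC}(1)}$. Any term multiplied by a flag equal to $0$ is taken to be $0$. Polynomials: $\phi_0(t)=\tfrac12(1-t)$, $\phi_1(t)=\tfrac12(1+t)$; $\varphi_0=\phi_0^2(1+2\phi_1)$, $\varphi_1=\phi_1^2(1+2\phi_0)$, $\psi_0=2\phi_0^2\phi_1$, $\psi_1=-2\phi_0\phi_1^2$. $Pg(\xi,\eta)=g(-1,\eta)\varphi_0(\xi)+g_\xi(1,\eta)\psi_1(\xi)+g(\xi,-1)\varphi_0(\eta)+g(\xi,1)\varphi_1(\eta)-[g(-1,-1)\varphi_0(\eta)+g(-1,1)\varphi_1(\eta)]\varphi_0(\xi)-[g_\xi(1,-1)\varphi_0(\eta)+g_\xi(1,1)\varphi_1(\eta)]\psi_1(\xi)+[\lambda_Bg_\eta(1,-1)\psi_0(\eta)+\lambda_Cg_\eta(1,1)\psi_1(\eta)]\varphi_1(\xi)$. $F^g_\xi(1,\eta)=T_{rBC}(\eta)-S_{BC}(\eta)\{g_\eta(1,\eta)-[g(1,-1)-F(1,-1)]\varphi_0'(\eta)-[g(1,1)-F(1,1)]\varphi_1'(\eta)-\lambda_B[g_\eta(1,-1)-F^a_\eta(1,-1)]\psi_0'(\eta)-\lambda_C[g_\eta(1,1)-F^a_\eta(1,1)]\psi_1'(\eta)\}-\alpha_{BC}W_{BC}(\eta)\{g(1,\eta)-[g(1,-1)-F(1,-1)]\varphi_0(\eta)-[g(1,1)-F(1,1)]\varphi_1(\eta)-\lambda_B[g_\eta(1,-1)-F^a_\eta(1,-1)]\psi_0(\eta)-\lambda_C[g_\eta(1,1)-F^a_\eta(1,1)]\psi_1(\eta)\}$.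 $PF^g(\xi,\eta)=F(-1,\eta)\varphi_0(\xi)+F^g_\xi(1,\eta)\psi_1(\xi)+F(\xi,-1)\varphi_0(\eta)+F(\xi,1)\varphi_1(\eta)-[F(-1,-1)\varphi_0(\eta)+F(-1,1)\varphi_1(\eta)]\varphi_0(\xi)-[F_\xi(1,-1)\varphi_0(\eta)+F_\xi(1,1)\varphi_1(\eta)]\psi_1(\xi)+[\lambda_BF^a_\eta(1,-1)\psi_0(\eta)+\lambda_CF^a_\eta(1,1)\psi_1(\eta)]\varphi_1(\xi)$. *)

From Stdlib Require Import Reals Lra.
From Coquelicot Require Import Coquelicot.
Open Scope R_scope.

Definition pxi (f : R -> R -> R) (a b : R) : R := Derive (fun t => f t b) a.
Definition peta (f : R -> R -> R) (a b : R) : R := Derive (fun t => f a t) b.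

Definition phi0 (t : R) : R := (1 - t) / 2.
Definition phi1 (t : R) : R := (1 + t) / 2.
Definition vphi0 (t : R) : R := phi0 t ^ 2 * (1 + 2 * phi1 t).
Definition vphi1 (t : R) : R := phi1 t ^ 2 * (1 + 2 * phi0 t).
Definition psi0 (t : R) : R := 2 * phi0 t ^ 2 * phi1 t.
Definition psi1 (t : R) : R := - 2 * phi0 t * phi1 t ^ 2.

Section Construction.
Variables (x y : R -> R -> R).
(* Robin coefficient and Robin data u_rBC (a function on R^2) *)
Variables (alpha : R) (u : R -> R -> R).
(* Dirichlet data: Fl = F(-1,.), Fb = F(.,-1), Ft = F(.,1) *)
Variables (Fl Fb Ft : R -> R).

Definition detJ (a b : R) : R := pxi x a b * peta y a b - peta x a b * pxi y a b.
Definition norm_xeta (b : R) : R := sqrt (peta x 1 b ^ 2 + peta y 1 b ^ 2).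
Definition dot_xixeta (b : R) : R := pxi x 1 b * peta x 1 b + pxi y 1 b * peta y 1 b.

Definition KxBC (b : R) : R := norm_xeta b / detJ 1 b.
Definition KyBC (b : R) : R := - (dot_xixeta b / (norm_xeta b * detJ 1 b)).
Definition SBC (b : R) : R := KyBC b / KxBC b.
Definition WBC (b : R) : R := / KxBC b.
Definition TrBC (b : R) : R := u (x 1 b) (y 1 b) * WBC b.

Definition lamB : R := if Req_EM_T (dot_xixeta (-1)) 0 then 0 else 1.
Definition lamC : R := if Req_EM_T (dot_xixeta 1) 0 then 0 else 1.

(* F(1,-1) = Fb 1, F(1,1) = Ft 1, F_xi(1,-1) = Fb'(1), F_xi(1,1) = Ft'(1) *)
Definition FaB : R :=
  (TrBC (-1) - Derive Fb 1 - alpha * WBC (-1) * Fb 1) / SBC (-1).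
Definition FaC : R :=
  (TrBC 1 - Derive Ft 1 - alpha * WBC 1 * Ft 1) / SBC 1.

Definition Pg (g : R -> R -> R) (a b : R) : R :=
  g (-1) b * vphi0 a + pxi g 1 b * psi1 a
  + g a (-1) * vphi0 b + g a 1 * vphi1 b
  - (g (-1) (-1) * vphi0 b + g (-1) 1 * vphi1 b) * vphi0 a
  - (pxi g 1 (-1) * vphi0 b + pxi g 1 1 * vphi1 b) * psi1 a
  + (lamB * peta g 1 (-1) * psi0 b + lamC * peta g 1 1 * psi1 b) * vphi1 a.

Definition Fgxi (g : R -> R -> R) (b : R) : R :=
  TrBC b
  - SBC b * (peta g 1 b
             - (g 1 (-1) - Fb 1) * Derive vphi0 b
             - (g 1 1 - Ft 1) * Derive vphi1 b
             - lamB * (peta g 1 (-1) - FaB) * Derive psi0 b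
             - lamC * (peta g 1 1 - FaC) * Derive psi1 b)
  - alpha * WBC b * (g 1 b
             - (g 1 (-1) - Fb 1) * vphi0 b
             - (g 1 1 - Ft 1) * vphi1 b
             - lamB * (peta g 1 (-1) - FaB) * psi0 b
             - lamC * (peta g 1 1 - FaC) * psi1 b).

(* F(-1,-1) := Fl(-1), F(-1,1) := Fl 1 (equal to Fb(-1), Ft(-1) by corner
   compatibility). *)
Definition PFg (g : R -> R -> R) (a b : R) : R :=
  Fl b * vphi0 a + Fgxi g b * psi1 a
  + Fb a * vphi0 b + Ft a * vphi1 b
  - (Fl (-1) * vphi0 b + Fl 1 * vphi1 b) * vphi0 a
  - (Derive Fb 1 * vphi0 b + Derive Ft 1 * vphi1 b) * psi1 a
  + (lamB * FaB * psi0 b + lamC * FaC * psi1 b) * vphi1 a.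

Definition Vsol (g : R -> R -> R) (a b : R) : R := g a b - Pg g a b + PFg g a b.

End Construction.

Definition C1_2d (f : R -> R -> R) : Prop :=
  (forall a b, ex_derive (fun t => f t b) a /\ ex_derive (fun t => f a t) b) /\
  (forall p : R * R,
      continuous (fun q : R * R => pxi f (fst q) (snd q)) p /\
      continuous (fun q : R * R => peta f (fst q) (snd q)) p).

(* Pg and PF^g are both instances of one transfinite Hermite interpolant,
   which reproduces its data on the edges xi = -1, eta = -1, eta = 1 and whose
   xi-derivative on xi = 1 is its slope datum.  Hence V = g - Pg + PF^g
   inherits the Dirichlet data of PF^g; these match F once
   F^g_xi(1, +-1) = F_xi(1, +-1), which at each corner is either the
   definition of F^a_eta (when S_BC <> 0) or the compatibility hypothesis
   (when lambda = 0, which forces S_BC = 0).  On xi = 1, V is the trace of g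
   corrected by the corner data, and F^g_xi is by construction the
   xi-derivative that makes this trace satisfy the Robin condition. *)
From Stdlib Require Import Reals Lra.
From Coquelicot Require Import Coquelicot.
Open Scope R_scope.

Lemma is_derive_vphi0 t : is_derive vphi0 t (- 3 * (1 - t ^ 2) / 4).
Proof. unfold vphi0, phi0, phi1; auto_derive; auto; field. Qed.

Lemma is_derive_vphi1 t : is_derive vphi1 t (3 * (1 - t ^ 2) / 4).
Proof. unfold vphi1, phi0, phi1; auto_derive; auto; field. Qed.

Lemma is_derive_psi0 t : is_derive psi0 t ((1 - t) * (- 1 - 3 * t) / 4).
Proof. unfold psi0, phi0, phi1; auto_derive; auto; field. Qed.

Lemma is_derive_psi1 t : is_derive psi1 t (- (1 + t) * (1 - 3 * t) / 4).
Proof. unfold psi1, phi0, phi1; auto_derive; auto; field. Qed.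

Lemma ex_derive_vphi0 t : ex_derive vphi0 t.
Proof. eexists; apply is_derive_vphi0. Qed.

Lemma ex_derive_vphi1 t : ex_derive vphi1 t.
Proof. eexists; apply is_derive_vphi1. Qed.

Lemma ex_derive_psi0 t : ex_derive psi0 t.
Proof. eexists; apply is_derive_psi0. Qed.

Lemma ex_derive_psi1 t : ex_derive psi1 t.
Proof. eexists; apply is_derive_psi1. Qed.

Lemma hermite_at_m1 :
  vphi0 (-1) = 1 /\ vphi1 (-1) = 0 /\ psi0 (-1) = 0 /\ psi1 (-1) = 0.
Proof. unfold vphi0, vphi1, psi0, psi1, phi0, phi1; repeat split; field. Qed.

Lemma hermite_at_1 :
  vphi0 1 = 0 /\ vphi1 1 = 1 /\ psi0 1 = 0 /\ psi1 1 = 0.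
Proof. unfold vphi0, vphi1, psi0, psi1, phi0, phi1; repeat split; field. Qed.

Lemma hermite_slopes_at_m1 :
  Derive vphi0 (-1) = 0 /\ Derive vphi1 (-1) = 0 /\
  Derive psi0 (-1) = 1 /\ Derive psi1 (-1) = 0.
Proof.
  rewrite (is_derive_unique _ _ _ (is_derive_vphi0 _)),
    (is_derive_unique _ _ _ (is_derive_vphi1 _)),
    (is_derive_unique _ _ _ (is_derive_psi0 _)),
    (is_derive_unique _ _ _ (is_derive_psi1 _)).
  repeat split; field.
Qed.

Lemma hermite_slopes_at_1 :
  Derive vphi0 1 = 0 /\ Derive vphi1 1 = 0 /\
  Derive psi0 1 = 0 /\ Derive psi1 1 = 1.
Proof.
  rewrite (is_derive_unique _ _ _ (is_derive_vphi0 _)),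
    (is_derive_unique _ _ _ (is_derive_vphi1 _)),
    (is_derive_unique _ _ _ (is_derive_psi0 _)),
    (is_derive_unique _ _ _ (is_derive_psi1 _)).
  repeat split; field.
Qed.

(* [auto_derive] reports derivatives of eta-expanded functions. *)
Ltac eta_reduce_Derive :=
  repeat match goal with
  | |- context [Derive (fun t => ?f t)] => change (Derive (fun t => f t)) with (Derive f)
  end.

(* [L] = left edge data, [Sx] = xi-slope on the right edge, [B]/[T] = bottom/top
   edge data; [cLB], [cLT] are the left corner values, [sB], [sT] the corner
   xi-slopes on the right and [eB], [eT] the corner eta-slopes on the right. *)
Definition hermite_interp (L Sx B T : R -> R) (cLB cLT sB sT eB eT : R)
    (a b : R) : R :=
  L b * vphi0 a + Sx b * psi1 a + B a * vphi0 b + T a * vphi1 b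
  - (cLB * vphi0 b + cLT * vphi1 b) * vphi0 a
  - (sB * vphi0 b + sT * vphi1 b) * psi1 a
  + (eB * psi0 b + eT * psi1 b) * vphi1 a.

Section HermiteInterp.

Variables (L Sx B T : R -> R) (cLB cLT sB sT eB eT : R).

Local Notation I := (hermite_interp L Sx B T cLB cLT sB sT eB eT).

Lemma hermite_interp_bottom a :
  L (-1) = cLB -> Sx (-1) = sB -> I a (-1) = B a.
Proof.
  intros <- <-; unfold hermite_interp.
  destruct hermite_at_m1 as (-> & -> & -> & ->); ring.
Qed.

Lemma hermite_interp_top a :
  L 1 = cLT -> Sx 1 = sT -> I a 1 = T a.
Proof.
  intros <- <-; unfold hermite_interp.
  destruct hermite_at_1 as (-> & -> & -> & ->); ring.
Qed.

Lemma hermite_interp_left b :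
  B (-1) = cLB -> T (-1) = cLT -> I (-1) b = L b.
Proof.
  intros <- <-; unfold hermite_interp.
  destruct hermite_at_m1 as (-> & -> & _ & ->); ring.
Qed.

Lemma hermite_interp_right b :
  I 1 b = B 1 * vphi0 b + T 1 * vphi1 b + eB * psi0 b + eT * psi1 b.
Proof.
  unfold hermite_interp.
  destruct hermite_at_1 as (-> & -> & _ & ->); ring.
Qed.

Lemma is_derive_hermite_interp_right b :
  ex_derive B 1 -> ex_derive T 1 -> Derive B 1 = sB -> Derive T 1 = sT ->
  is_derive (fun a => I a b) 1 (Sx b).
Proof.
  intros HB HT <- <-; unfold hermite_interp.
  auto_derive.
  - repeat split; auto using ex_derive_vphi0, ex_derive_vphi1, ex_derive_psi1.
  - eta_reduce_Derive.
    destruct hermite_slopes_at_1 as (-> & -> & _ & ->); ring.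
Qed.

End HermiteInterp.

Lemma robin_corner_solve (lam S T w F dF p : R) :
  (lam = 0 -> dF + w * F - T = 0) ->
  (lam = 0 /\ S = 0) \/ (lam = 1 /\ S <> 0) ->
  T - S * (p - lam * (p - (T - dF - w * F) / S)) - w * F = dF.
Proof.
  intros Hcompat [[Hl HS] | [Hl HS]].
  - rewrite HS; specialize (Hcompat Hl); lra.
  - rewrite Hl; field; exact HS.
Qed.

Section Solution.

Variables (x y : R -> R -> R) (alpha : R) (u : R -> R -> R) (Fl Fb Ft : R -> R).

Lemma norm_xeta_neq0 c : dot_xixeta x y c <> 0 -> norm_xeta x y c <> 0.
Proof.
  unfold norm_xeta, dot_xixeta; intros Hdot Hnorm; apply Hdot.
  apply sqrt_eq_0 in Hnorm; [|nra].
  assert (Hx : peta x 1 c = 0) by nra.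
  assert (Hy : peta y 1 c = 0) by nra.
  rewrite Hx, Hy; ring.
Qed.

Lemma SBC_eq0 c : dot_xixeta x y c = 0 -> SBC x y c = 0.
Proof. intro Hdot; unfold SBC, KyBC; rewrite Hdot; unfold Rdiv; ring. Qed.

Lemma SBC_neq0 c :
  detJ x y 1 c <> 0 -> dot_xixeta x y c <> 0 -> SBC x y c <> 0.
Proof.
  intros Hdet Hdot HS; apply Hdot.
  assert (Hn := norm_xeta_neq0 c Hdot).
  assert (E : SBC x y c = - dot_xixeta x y c / norm_xeta x y c ^ 2)
    by (unfold SBC, KyBC, KxBC; field; auto).
  replace (dot_xixeta x y c) with (- SBC x y c * norm_xeta x y c ^ 2)
    by (rewrite E; field; auto).
  rewrite HS; ring.
Qed.

Lemma corner_flag_spec c : detJ x y 1 c <> 0 ->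
  let lam := if Req_EM_T (dot_xixeta x y c) 0 then 0 else 1 in
  (lam = 0 /\ SBC x y c = 0) \/ (lam = 1 /\ SBC x y c <> 0).
Proof.
  intros Hdet; simpl.
  destruct (Req_EM_T (dot_xixeta x y c) 0) as [Hdot | Hdot].
  - left; split; [reflexivity | exact (SBC_eq0 c Hdot)].
  - right; split; [reflexivity | exact (SBC_neq0 c Hdet Hdot)].
Qed.

Variable g : R -> R -> R.

Local Notation Fg := (Fgxi x y alpha u Fb Ft g).
Local Notation V := (Vsol x y alpha u Fl Fb Ft g).

Lemma Fgxi_at_m1 : detJ x y 1 (-1) <> 0 ->
  (lamB x y = 0 ->
     Derive Fb 1 + alpha * WBC x y (-1) * Fb 1 - TrBC x y u (-1) = 0) ->
  Fg (-1) = Derive Fb 1.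
Proof.
  intros Hdet Hcompat; unfold Fgxi.
  destruct hermite_at_m1 as (-> & -> & -> & ->).
  destruct hermite_slopes_at_m1 as (-> & -> & -> & ->).
  etransitivity;
    [| exact (robin_corner_solve _ _ _ _ _ _ (peta g 1 (-1)) Hcompat
                (corner_flag_spec (-1) Hdet))].
  unfold FaB; ring.
Qed.

Lemma Fgxi_at_1 : detJ x y 1 1 <> 0 ->
  (lamC x y = 0 ->
     Derive Ft 1 + alpha * WBC x y 1 * Ft 1 - TrBC x y u 1 = 0) ->
  Fg 1 = Derive Ft 1.
Proof.
  intros Hdet Hcompat; unfold Fgxi.
  destruct hermite_at_1 as (-> & -> & -> & ->).
  destruct hermite_slopes_at_1 as (-> & -> & -> & ->).
  etransitivity;
    [| exact (robin_corner_solve _ _ _ _ _ _ (peta g 1 1) Hcompat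
                (corner_flag_spec 1 Hdet))].
  unfold FaC; ring.
Qed.

Definition trace_BC (t : R) : R :=
  g 1 t
  - (g 1 (-1) - Fb 1) * vphi0 t
  - (g 1 1 - Ft 1) * vphi1 t
  - lamB x y * (peta g 1 (-1) - FaB x y alpha u Fb) * psi0 t
  - lamC x y * (peta g 1 1 - FaC x y alpha u Ft) * psi1 t.

Lemma Fgxi_trace_BC b : ex_derive (fun t => g 1 t) b ->
  Fg b = TrBC x y u b - SBC x y b * Derive trace_BC b
         - alpha * WBC x y b * trace_BC b.
Proof.
  intros Hg.
  assert (Htrace : is_derive trace_BC b
    (peta g 1 b
     - (g 1 (-1) - Fb 1) * Derive vphi0 b
     - (g 1 1 - Ft 1) * Derive vphi1 b
     - lamB x y * (peta g 1 (-1) - FaB x y alpha u Fb) * Derive psi0 b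
     - lamC x y * (peta g 1 1 - FaC x y alpha u Ft) * Derive psi1 b)).
  { unfold trace_BC; auto_derive.
    - repeat split;
        auto using ex_derive_vphi0, ex_derive_vphi1, ex_derive_psi0, ex_derive_psi1.
    - unfold peta; eta_reduce_Derive; ring. }
  rewrite (is_derive_unique _ _ _ Htrace); reflexivity.
Qed.

Lemma Pg_hermite_interp a b :
  Pg x y g a b =
  hermite_interp (g (-1)) (pxi g 1) (fun t => g t (-1)) (fun t => g t 1)
    (g (-1) (-1)) (g (-1) 1) (pxi g 1 (-1)) (pxi g 1 1)
    (lamB x y * peta g 1 (-1)) (lamC x y * peta g 1 1) a b.
Proof. reflexivity. Qed.

Lemma PFg_hermite_interp a b :
  PFg x y alpha u Fl Fb Ft g a b =
  hermite_interp Fl Fg Fb Ft (Fl (-1)) (Fl 1) (Derive Fb 1) (Derive Ft 1)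
    (lamB x y * FaB x y alpha u Fb) (lamC x y * FaC x y alpha u Ft) a b.
Proof. reflexivity. Qed.

Lemma Vsol_bottom a : Fg (-1) = Derive Fb 1 -> V a (-1) = Fb a.
Proof.
  intros HFg; unfold Vsol.
  rewrite Pg_hermite_interp, PFg_hermite_interp, !hermite_interp_bottom; auto.
  ring.
Qed.

Lemma Vsol_top a : Fg 1 = Derive Ft 1 -> V a 1 = Ft a.
Proof.
  intros HFg; unfold Vsol.
  rewrite Pg_hermite_interp, PFg_hermite_interp, !hermite_interp_top; auto.
  ring.
Qed.

Lemma Vsol_left b : Fb (-1) = Fl (-1) -> Ft (-1) = Fl 1 -> V (-1) b = Fl b.
Proof.
  intros HB HT; unfold Vsol.
  rewrite Pg_hermite_interp, PFg_hermite_interp, !hermite_interp_left; auto.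
  ring.
Qed.

Lemma Vsol_right t : V 1 t = trace_BC t.
Proof.
  unfold Vsol, trace_BC.
  rewrite Pg_hermite_interp, PFg_hermite_interp, !hermite_interp_right.
  ring.
Qed.

Lemma pxi_Vsol_right b :
  (forall c, ex_derive (fun a => g a c) 1) -> ex_derive Fb 1 -> ex_derive Ft 1 ->
  pxi V 1 b = Fg b.
Proof.
  intros Hg HFb HFt.
  assert (Hg1 : is_derive (fun a => g a b) 1 (pxi g 1 b))
    by (apply Derive_correct, Hg).
  assert (HP := is_derive_hermite_interp_right (g (-1)) (pxi g 1)
    (fun t => g t (-1)) (fun t => g t 1) (g (-1) (-1)) (g (-1) 1)
    (pxi g 1 (-1)) (pxi g 1 1) (lamB x y * peta g 1 (-1))
    (lamC x y * peta g 1 1) b (Hg _) (Hg _) eq_refl eq_refl).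
  assert (HPF := is_derive_hermite_interp_right Fl Fg Fb Ft (Fl (-1)) (Fl 1)
    (Derive Fb 1) (Derive Ft 1) (lamB x y * FaB x y alpha u Fb)
    (lamC x y * FaC x y alpha u Ft) b HFb HFt eq_refl eq_refl).
  unfold pxi; apply is_derive_unique.
  replace (Fg b) with (pxi g 1 b - pxi g 1 b + Fg b) by ring.
  exact (is_derive_plus _ _ _ _ _ (is_derive_minus _ _ _ _ _ Hg1 HP) HPF).
Qed.

Lemma Vsol_robin b :
  (forall c, ex_derive (fun a => g a c) 1) -> ex_derive (fun t => g 1 t) b ->
  ex_derive Fb 1 -> ex_derive Ft 1 ->
  pxi V 1 b + SBC x y b * peta V 1 b + alpha * WBC x y b * V 1 b
  = TrBC x y u b.
Proof.
  intros Hgxi Hgeta HFb HFt.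
  assert (Heta : peta V 1 b = Derive trace_BC b)
    by (apply Derive_ext, Vsol_right).
  rewrite pxi_Vsol_right, Fgxi_trace_BC, Heta, Vsol_right by assumption.
  ring.
Qed.

End Solution.

Theorem mainTheorem3
  (x y : R -> R -> R) (alpha : R) (u : R -> R -> R) (Fl Fb Ft : R -> R) :
  C1_2d x -> C1_2d y ->
  (forall b, -1 <= b <= 1 -> detJ x y 1 b <> 0) ->
  (forall t, ex_derive Fl t) -> (forall t, ex_derive Fb t) ->
  (forall t, ex_derive Ft t) ->
  Fl (-1) = Fb (-1) -> Fl 1 = Ft (-1) ->
  (lamB x y = 0 ->
     Derive Fb 1 + alpha * WBC x y (-1) * Fb 1 - TrBC x y u (-1) = 0) ->
  (lamC x y = 0 ->
     Derive Ft 1 + alpha * WBC x y 1 * Ft 1 - TrBC x y u 1 = 0) ->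
  forall g : R -> R -> R, C1_2d g ->
  forall a b : R, -1 <= a <= 1 -> -1 <= b <= 1 ->
    let V := Vsol x y alpha u Fl Fb Ft g in
    V a (-1) = Fb a /\ V a 1 = Ft a /\ V (-1) b = Fl b /\
    pxi V 1 b + SBC x y b * peta V 1 b + alpha * WBC x y b * V 1 b
      = TrBC x y u b.
Proof.
  intros _ _ Hdet _ HFb HFt HcornB HcornT HcompB HcompC g [Hg _] a b _ _ V.
  split; [| split; [| split]].
  - apply Vsol_bottom, Fgxi_at_m1; [apply Hdet; lra | exact HcompB].
  - apply Vsol_top, Fgxi_at_1; [apply Hdet; lra | exact HcompC].
  - apply Vsol_left; symmetry; assumption.
  - apply Vsol_robin.
    + intro c; exact (proj1 (Hg 1 c)).
    + exact (proj2 (Hg 1 b)).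
    + apply HFb.
    + apply HFt.
Qed.
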